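(* Let $(S,K,I)$ be a split graph with $|I|\ge2$ and $K=\bigcup_{v\in I}N_S(v)$. If $\Phi(S)$ is simple and connected, then $S$ is homogeneous.
   Context: All graphs are finite and simple. A split graph is a graph $S$ whose vertex set is a disjoint union $V(S)=K\,\dot\cup\,I$ with $K$ a clique and $I$ an independent set; $(K,I)$ is called a bipartition of $S$, and $(S,K,I)$ denotes $S$ together with this fixed bipartition. For a split graph $(S,K,I)$ and distinct $u,v\in I$, $\sigma_{uv}(S)$ is the number of induced subgraphs of $S$ isomorphic to $P_4$ containing both $u$ and $v$. The factor graph $\Phi(S)$ is the loopless multigraph with vertex set $I$ having exactly $\sigma_{uv}(S)$ parallel edges between $u$ and $v$; it is simple if $\sigma_{uv}(S)\in\{0,1\}$ for all $u,v$. Graph notions (connected, complete, clique, etc.) applied to $\Phi(S)$ refer to its underlying simple graph, in which $u\sim v$ iff $\sigma_{uv}(S)\ge1$. A vertex $w$ of $(S,K,I)$ is swing if $N_S(w)=K\setminus\{w\}$. $(S,K,I)$ is balanced if $|K|=\omega(S)$ and $|I|=\alpha(S)$; it is known that $S$ is balanced iff it has no swing vertex. $(S,K,I)$ is homogeneous if it is balanced and all vertices of $I$ have the same degree in $S$. *)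

(* A finite simple graph is a symmetric irreflexive
   relation e on a finType T. *)
From mathcomp Require Import all_boot.
Set Implicit Arguments. Unset Strict Implicit. Unset Printing Implicit Defensive.

Section Graphs.
Variable T : finType.
Variable e : rel T.

Definition nbh (v : T) : {set T} := [set w | e v w].
Definition deg (v : T) : nat := #|nbh v|.

Definition is_clique (A : {set T}) : bool :=
  [forall x in A, forall y in A, (x != y) ==> e x y].
Definition is_indep (A : {set T}) : bool :=
  [forall x in A, forall y in A, ~~ e x y].

Definition omega : nat := \max_(A : {set T} | is_clique A) #|A|.
Definition alpha : nat := \max_(A : {set T} | is_indep A) #|A|.

Definition split_bipartition (K I : {set T}) : bool :=
  [&& K :&: I == set0, K :|: I == setT, is_clique K & is_indep I].

Definition induces_P4 (X : {set T}) : bool :=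
  [exists a, exists b, exists c, exists d,
     [&& X == [set a; b; c; d], #|X| == 4,
         e a b, e b c, e c d, ~~ e a c, ~~ e b d & ~~ e a d]].

Definition sigma (u v : T) : nat :=
  #|[set X : {set T} | [&& u \in X, v \in X & induces_P4 X]]|.

Definition factor_simple (I : {set T}) : Prop :=
  forall u v, u \in I -> v \in I -> u != v -> sigma u v <= 1.

(* adjacency of the underlying simple graph of Phi(S) *)
Definition factor_adj (I : {set T}) : rel T :=
  fun u v => [&& u \in I, v \in I, u != v & 0 < sigma u v].

Definition factor_connected (I : {set T}) : Prop :=
  forall u v, u \in I -> v \in I -> connect (factor_adj I) u v.

Definition balanced (K I : {set T}) : Prop :=
  #|K| = omega /\ #|I| = alpha.

Definition homogeneous (K I : {set T}) : Prop :=
  balanced K I /\ (forall u v, u \in I -> v \in I -> deg u = deg v).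

End Graphs.

From mathcomp Require Import all_boot.

Set Implicit Arguments.
Unset Strict Implicit.
Unset Printing Implicit Defensive.

(* For u, v in I, every induced P4 through u and v has the shape u - x - y - v
   with x in N(u) \ N(v) and y in N(v) \ N(u) (its inner vertices lie in the
   clique K).  Fixing y, each x in N(u) \ N(v) yields a different P4, so
   |N(u) \ N(v)| <= sigma_uv.  When u and v are adjacent in the simple factor
   graph both private neighbourhoods therefore have exactly one element, hence
   deg u = deg v, and connectivity propagates this to all of I.
   Balancedness: a vertex of I is never complete to K (it misses the private
   neighbour of any factor-neighbour), so K is a maximum clique; a vertex of K
   always has a neighbour in I, so I is a maximum independent set. *)

Lemma card_set4 (T : finType) (a b c d : T) :
  a != b -> a != c -> a != d -> b != c -> b != d -> c != d ->
  #|[set a; b; c; d]| = 4.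
Proof.
move=> ab ac ad bc bd cd.
rewrite setUC cardsU1 setUC cardsU1 cardsU1 cards1 !inE.
rewrite !(eq_sym d) (eq_sym c a) (eq_sym c b).
by rewrite (negPf ab) (negPf ac) (negPf ad) (negPf bc) (negPf bd) (negPf cd).
Qed.

Lemma sigmaC (T : finType) (e : rel T) (u v : T) : sigma e u v = sigma e v u.
Proof. by apply: eq_card => X; rewrite !inE andbCA. Qed.

Lemma connect_eq_fun (T : finType) (r : rel T) (A : Type) (f : T -> A) :
  (forall x y, r x y -> f x = f y) -> forall x y, connect r x y -> f x = f y.
Proof.
move=> fr x y /connectP[p + ->]; elim: p x => //= z p IH x /andP[rxz pz].
by rewrite (fr x z rxz) IH.
Qed.

Section SplitGraph.
Variables (T : finType) (e : rel T).
Hypotheses (e_sym : symmetric e) (e_irr : irreflexive e).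
Variables K I : {set T}.
Hypothesis KI_split : split_bipartition e K I.

Lemma split_memI x : (x \in I) = (x \notin K).
Proof.
case/and4P: KI_split => /eqP KI0 /eqP KIT _ _.
have /setP/(_ x) := KI0; have /setP/(_ x) := KIT.
by rewrite !inE; case: (x \in K); case: (x \in I).
Qed.

Lemma split_clique_edge x y : x \in K -> y \in K -> x != y -> e x y.
Proof.
case/and4P: KI_split => _ _ /forall_inP cK _ xK yK.
by move/forall_inP: (cK x xK) => /(_ y yK) /implyP.
Qed.

Lemma split_indep_noedge x y : x \in I -> y \in I -> ~~ e x y.
Proof.
case/and4P: KI_split => _ _ _ /forall_inP iI xI yI.
by move/forall_inP: (iI x xI) => /(_ y yI).
Qed.

Lemma split_nbh_indep x y : x \in I -> e x y -> y \in K.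
Proof.
move=> xI exy; apply: contraT; rewrite -split_memI => yI.
by move: (split_indep_noedge xI yI); rewrite exy.
Qed.

Lemma split_nbh_indep_clique v a b :
  v \in I -> e v a -> e v b -> a != b -> e a b.
Proof. by move=> vI eva evb; apply: split_clique_edge; apply: split_nbh_indep vI _. Qed.

Lemma split_clique_max :
  {in I, forall v, exists2 y, y \in K & ~~ e v y} -> #|K| = omega e.
Proof.
move=> not_swing; apply/eqP; rewrite eqn_leq /omega.
have /and4P[_ _ cK _] := KI_split.
rewrite (leq_bigmax_cond _ cK) /=.
apply/bigmax_leqP => A /forall_inP cA.
have cAE x y : x \in A -> y \in A -> x != y -> e x y.
  by move=> xA yA; move/forall_inP: (cA x xA) => /(_ y yA) /implyP.
case: (boolP [exists v in A, v \in I]) => [/exists_inP[v vA vI] | /exists_inPn noI].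
- have [y yK nvy] := not_swing v vI.
  rewrite (cardsD1 v) vA add1n; apply: proper_card; apply/properP; split.
  + apply/subsetP=> w; rewrite !inE => /andP[wv wA].
    by apply: (split_nbh_indep vI); apply: cAE; rewrite // eq_sym.
  + exists y => //; rewrite !inE; apply: contra nvy => /andP[yv yA].
    by apply: cAE; rewrite // eq_sym.
- apply/subset_leq_card/subsetP => w wA.
  by move: (noI w wA); rewrite split_memI negbK.
Qed.

Lemma split_indep_max :
  {in K, forall k, exists2 v, v \in I & e v k} -> #|I| = alpha e.
Proof.
move=> K_covered; apply/eqP; rewrite eqn_leq /alpha.
have /and4P[_ _ _ iI] := KI_split.
rewrite (leq_bigmax_cond _ iI) /=.
apply/bigmax_leqP => A /forall_inP iA.
have iAE x y : x \in A -> y \in A -> ~~ e x y.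
  by move=> xA yA; move/forall_inP: (iA x xA) => /(_ y yA).
case: (boolP [exists k in A, k \in K]) => [/exists_inP[k kA kK] | /exists_inPn noK].
- have [v vI evk] := K_covered k kK.
  rewrite (cardsD1 k) kA add1n; apply: proper_card; apply/properP; split.
  + apply/subsetP=> w; rewrite !inE split_memI => /andP[wk wA].
    by apply: contra (iAE k w kA wA) => wK; apply: split_clique_edge; rewrite // eq_sym.
  + by exists v => //; rewrite !inE; apply: contraL evk => /andP[_ vA]; apply: iAE.
- by apply/subset_leq_card/subsetP => w wA; rewrite split_memI noK.
Qed.

Lemma split_P4_shape u v (X : {set T}) :
  u \in I -> v \in I -> u != v -> u \in X -> v \in X -> induces_P4 e X ->
  exists x y, [/\ X = [set u; x; y; v], e u x, ~~ e v x, e v y & ~~ e u y].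
Proof.
move=> uI vI uv uX vX /existsP[a /existsP[b /existsP[c /existsP[d]]]].
case/and5P=> /eqP defX _ eab ebc /and4P[ecd nac nbd nad].
have ac : a != c by apply: contraNneq nad => ->; rewrite ecd.
have bd : b != d by apply: contraNneq nad => <-; rewrite eab.
have bI : b \notin I.
  apply: contra nac => bI; apply: (split_nbh_indep_clique bI) => //.
  by rewrite e_sym.
have cI : c \notin I.
  apply: contra nbd => cI; apply: (split_nbh_indep_clique cI) => //.
  by rewrite e_sym.
have endI w : w \in I -> w \in X -> (w == a) || (w == d).
  move=> wI; rewrite defX !inE -!orbA => /or4P[-> | /eqP wb | /eqP wc | ->] //.
  - by rewrite -wb wI in bI.
  - by rewrite -wc wI in cI.
  - by rewrite orbT.
case/orP: (endI u uI uX) => /eqP eu; case/orP: (endI v vI vX) => /eqP ev;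
  subst u v; rewrite ?eqxx // in uv.
- by exists b, c; rewrite (e_sym d b) (e_sym d c); split.
- exists c, b; rewrite (e_sym d c) (e_sym d b); split => //.
  apply/setP => z; rewrite defX !inE.
  by case: (z == a); case: (z == b); case: (z == c); case: (z == d).
Qed.

Lemma split_P4_of_private u v x y :
  u \in I -> v \in I -> u != v -> e u x -> ~~ e v x -> e v y -> ~~ e u y ->
  induces_P4 e [set u; x; y; v].
Proof.
move=> uI vI uv eux nvx evy nuy.
have xK := split_nbh_indep uI eux; have yK := split_nbh_indep vI evy.
have notK w : w \in K -> w \in I -> False by rewrite split_memI => ->.
have ux : u != x by apply: contraTneq eux => ->; rewrite e_irr.
have uy : u != y by apply: contraPneq (notK y yK) => <-.
have xv : x != v by apply: contraPneq (notK x xK) => ->.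
have yv : y != v by apply: contraPneq (notK y yK) => ->.
have xy : x != y by apply: contraNneq nvx => ->.
apply/existsP; exists u; apply/existsP; exists x; apply/existsP; exists y.
apply/existsP; exists v.
rewrite eqxx card_set4 // eux split_clique_edge // e_sym evy nuy.
by rewrite e_sym nvx split_indep_noedge.
Qed.

Lemma private_nbh_le_sigma u v :
  u \in I -> v \in I -> u != v -> 0 < sigma e u v ->
  #|nbh e u :\: nbh e v| <= sigma e u v.
Proof.
move=> uI vI uv /card_gt0P[X]; rewrite inE => /and3P[uX vX XP4].
have [_ [y [_ _ _ evy nuy]]] := split_P4_shape uI vI uv uX vX XP4.
pose P4 x := [set u; x; y; v].
have P4_inj : {in nbh e u :\: nbh e v &, injective P4}.
  move=> x1 x2; rewrite !inE => /andP[_ eux1] _ P4x.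
  have : x1 \in P4 x2 by rewrite -P4x !inE eqxx !orbT.
  rewrite !inE -!orbA => /or4P[/eqP ux | /eqP // | /eqP xy | /eqP xv].
  - by rewrite ux e_irr in eux1.
  - by rewrite -xy eux1 in nuy.
  - by rewrite xv (negPf (split_indep_noedge uI vI)) in eux1.
rewrite -(card_in_imset P4_inj); apply: subset_leq_card.
apply/subsetP=> _ /imsetP[x + ->]; rewrite !inE => /andP[nvx eux].
by rewrite !eqxx !orbT /=; apply: split_P4_of_private.
Qed.

Lemma sigma_gt0_private u v :
  u \in I -> v \in I -> u != v -> 0 < sigma e u v ->
  exists2 x, x \in nbh e u :\: nbh e v & x \in K.
Proof.
move=> uI vI uv /card_gt0P[X]; rewrite inE => /and3P[uX vX XP4].
have [x [_ [_ eux nvx _ _]]] := split_P4_shape uI vI uv uX vX XP4.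
by exists x; rewrite ?inE ?eux ?nvx //; apply: split_nbh_indep eux.
Qed.

Lemma deg_eq_sigma_le1 u v :
  u \in I -> v \in I -> u != v -> 0 < sigma e u v -> sigma e u v <= 1 ->
  deg e u = deg e v.
Proof.
move=> uI vI uv s_gt0 s_le1.
have vu : v != u by rewrite eq_sym.
have s'_gt0 : 0 < sigma e v u by rewrite sigmaC.
have private1 a b : a \in I -> b \in I -> a != b -> 0 < sigma e a b ->
    sigma e a b <= 1 -> #|nbh e a :\: nbh e b| = 1.
  move=> aI bI ab sab sab1; apply/eqP; rewrite eqn_leq.
  rewrite (leq_trans (private_nbh_le_sigma aI bI ab sab) sab1) card_gt0.
  by have [x x_priv _] := sigma_gt0_private aI bI ab sab; apply/set0Pn; exists x.
rewrite /deg -(cardsID (nbh e v) (nbh e u)) -(cardsID (nbh e u) (nbh e v)) setIC.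
by rewrite !private1 // sigmaC.
Qed.

Lemma factor_connected_deg_eq :
  factor_simple e I -> factor_connected e I ->
  {in I &, forall u v, deg e u = deg e v}.
Proof.
move=> Phi_simple Phi_conn u v uI vI; apply: connect_eq_fun (Phi_conn u v uI vI).
move=> a b /and4P[aI bI ab s_gt0].
by apply: deg_eq_sigma_le1 (Phi_simple a b aI bI ab).
Qed.

Lemma factor_connected_not_swing :
  2 <= #|I| -> factor_connected e I ->
  {in I, forall v, exists2 y, y \in K & ~~ e v y}.
Proof.
move=> I_ge2 Phi_conn v vI.
have /card_gt0P[u] : 0 < #|I :\ v| by rewrite (cardsD1 v) vI in I_ge2.
rewrite !inE => /andP[uv uI].
case/connectP: (Phi_conn v u vI uI) => -[/= _ eq_u | w p /= /andP[vw_adj _] _].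
  by rewrite eq_u eqxx in uv.
case/and4P: vw_adj => _ wI vw s_gt0.
have wv : w != v by rewrite eq_sym.
rewrite sigmaC in s_gt0.
have [y] := sigma_gt0_private wI vI wv s_gt0.
by rewrite !inE => /andP[nvy _]; exists y.
Qed.

End SplitGraph.

Theorem theorem3p3 (T : finType) (e : rel T)
  (e_sym : symmetric e) (e_irr : irreflexive e) (K I : {set T}) :
  split_bipartition e K I ->
  2 <= #|I| ->
  K = \bigcup_(v in I) nbh e v ->
  factor_simple e I ->
  factor_connected e I ->
  homogeneous e K I.
Proof.
move=> KI_split I_ge2 defK Phi_simple Phi_conn.
split; last exact: (factor_connected_deg_eq e_sym e_irr KI_split Phi_simple Phi_conn).
split; first exact: (split_clique_max KI_split
                       (factor_connected_not_swing e_sym KI_split I_ge2 Phi_conn)).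
apply: (split_indep_max KI_split) => k; rewrite defK => /bigcupP[v vI].
by rewrite inE; exists v.
Qed.
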